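(* Let $\mathbb X=\ell^\infty(\mathbb C)$, the real Banach space of bounded complex sequences $(x_k)_{k\in\mathbb N}$ with the supremum norm. For $t\in[0,1]$ define $g_t((x_k))=(t\,x_k e^{i\pi/(2k)})$ and $f_t((x_k))=(\tfrac t4x_k+1-\tfrac t4)$, and let $F^g_t=\{f_t,g_t\}$. For $t\in[0,1)$ both maps are contractions, so $F^g_t$ has a unique attractor $A_t$ (nonempty compact with $A_t=f_t(A_t)\cup g_t(A_t)$). Then there is no sequence $t_n\in[0,1)$ with $t_n\to1$ such that $(A_{t_n})$ converges in the Hausdorff metric; in particular $F^g_t$ has no upper transition attractor. More precisely, for every $s\in[\tfrac12,1)$ there is $t_0<1$ such that $h(A_t,A_s)\ge\tfrac12$ for all $t\in[t_0,1)$.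
   Context: $h$ denotes the Hausdorff metric on nonempty compact subsets of $\mathbb X$. An upper transition attractor of $F^g_t$ is a compact set $A^\bullet$ for which there is an increasing sequence $t_n\in[0,1)$, $t_n\to1$, with $h(A_{t_n},A^\bullet)\to0$. *)

From Stdlib Require Import Reals List.
From Coquelicot Require Import Coquelicot.
Open Scope R_scope.

(* Sequences of complex numbers; index k : nat stands for the paper's k+1
   (the paper indexes by k = 1, 2, ...). *)
Definition seqC := nat -> C.

Definition bounded_seq (x : seqC) : Prop := exists M : R, forall k, Cmod (x k) <= M.

(* sup-norm distance, extended-real valued (+oo between a bounded and an
   unbounded sequence); on l^oo it is the usual finite sup metric. *)
Definition linf_dist (x y : seqC) : Rbar :=
  Sup_seq (fun k => Finite (Cmod (Cminus (x k) (y k)))).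

Definition linf_open (U : seqC -> Prop) : Prop :=
  forall x, U x -> exists eps : R, 0 < eps /\
    forall y, Rbar_lt (linf_dist x y) (Finite eps) -> U y.

Definition linf_compact (K : seqC -> Prop) : Prop :=
  forall (I : Type) (U : I -> seqC -> Prop),
    (forall i, linf_open (U i)) ->
    (forall x, K x -> exists i, U i x) ->
    exists l : list I, forall x, K x -> exists i, In i l /\ U i x.

Definition nonempty_compact (K : seqC -> Prop) : Prop :=
  (exists x, K x) /\ (forall x, K x -> bounded_seq x) /\ linf_compact K.

Definition dist_to_set (x : seqC) (B : seqC -> Prop) : Rbar :=
  Glb_Rbar (fun r => exists b, B b /\ linf_dist x b = Finite r).

Definition excess (A B : seqC -> Prop) : Rbar :=
  Lub_Rbar (fun r => exists a, A a /\ dist_to_set a B = Finite r).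

Definition hausdorff (A B : seqC -> Prop) : R :=
  Rmax (real (excess A B)) (real (excess B A)).

Definition cis (theta : R) : C := (cos theta, sin theta).

Definition g_map (t : R) (x : seqC) : seqC :=
  fun k => Cmult (Cmult (RtoC t) (x k)) (cis (PI / (2 * INR (S k)))).

Definition f_map (t : R) (x : seqC) : seqC :=
  fun k => Cplus (Cmult (RtoC (t / 4)) (x k)) (RtoC (1 - t / 4)).

Definition is_attractor (t : R) (A : seqC -> Prop) : Prop :=
  nonempty_compact A /\
  forall x, A x <-> ((exists y, A y /\ x = f_map t y) \/ (exists y, A y /\ x = g_map t y)).

Definition upper_transition_attractor (A : R -> seqC -> Prop) (Ab : seqC -> Prop) : Prop :=
  nonempty_compact Ab /\
  exists tn : nat -> R,
    (forall n, 0 <= tn n < 1) /\ (forall n, tn n < tn (S n)) /\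
    is_lim_seq tn 1 /\ is_lim_seq (fun n => hausdorff (A (tn n)) Ab) 0.

From Stdlib Require Import Reals Lra Classical List.
From Coquelicot Require Import Coquelicot.
Open Scope R_scope.

(* Every point of A_t is within sup-distance 1 of the origin, and in coordinate
   k (rotation angle theta_k = pi/(2(k+1))) the imaginary parts of A_s are
   O(theta_k / (1 - s)), since g_s rotates by theta_k while contracting by s.
   On the other hand, applying f_t twice to any point of A_t gives real part
   >= 7/8 in coordinate k, and k+1 further applications of g_t rotate it by
   pi/2, producing a point of A_t with imaginary part >= 7/8 t^(k+1) there.
   Fixing s, choosing k with sin theta_k / (1 - s) <= 1/8 and then t close
   to 1 separates A_t from A_s by 5/8 in coordinate k. *)

Lemma Im_Cminus a b : Im (Cminus a b) = Im a - Im b.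
Proof. destruct a, b; simpl; ring. Qed.

Lemma Im_sub_le_Cmod a b : Im a - Im b <= Cmod (Cminus a b).
Proof.
  rewrite <- Im_Cminus.
  apply Rle_trans with (Rabs (Im (Cminus a b))); [apply Rle_abs |].
  apply Rle_trans with (2 := Rmax_Cmod _), Rmax_r.
Qed.

Lemma Rabs_Im_le_Cmod z : Rabs (Im z) <= Cmod z.
Proof. apply Rle_trans with (2 := Rmax_Cmod z), Rmax_r. Qed.

Lemma Cmod_Cminus_le a b : Cmod (Cminus a b) <= Cmod a + Cmod b.
Proof. unfold Cminus. rewrite <- (Cmod_opp b). apply Cmod_triangle. Qed.

Lemma Cmod_le_Cmod_Cminus a b : Cmod b <= Cmod a + Cmod (Cminus a b).
Proof.
  replace b with (Cminus a (Cminus a b)) at 1 by (unfold Cminus; ring).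
  apply Cmod_Cminus_le.
Qed.

Lemma Cmod_Cminus_triangle a b c :
  Cmod (Cminus a c) <= Cmod (Cminus a b) + Cmod (Cminus b c).
Proof.
  replace (Cminus a c) with (Cplus (Cminus a b) (Cminus b c)) by (unfold Cminus; ring).
  apply Cmod_triangle.
Qed.

Lemma Cmod_cis th : Cmod (cis th) = 1.
Proof.
  unfold cis, Cmod; simpl. rewrite <- sqrt_1 at 3. f_equal.
  generalize (sin2_cos2 th). unfold Rsqr. lra.
Qed.

Lemma cis_add a b : Cmult (cis a) (cis b) = cis (a + b).
Proof. unfold cis, Cmult; simpl. rewrite cos_plus, sin_plus. f_equal; ring. Qed.

Lemma linf_dist_ge_coord x y k :
  Rbar_le (Finite (Cmod (Cminus (x k) (y k)))) (linf_dist x y).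
Proof. apply Sup_seq_minor_le with k, Rbar_le_refl. Qed.

Lemma linf_dist_lt_coord x y k eps :
  Rbar_lt (linf_dist x y) (Finite eps) -> Cmod (Cminus (x k) (y k)) < eps.
Proof. intros H. exact (Rbar_le_lt_trans _ _ _ (linf_dist_ge_coord x y k) H). Qed.

Lemma linf_dist_Finite_coord x y k r :
  linf_dist x y = Finite r -> Cmod (Cminus (x k) (y k)) <= r.
Proof. intros H. generalize (linf_dist_ge_coord x y k). now rewrite H. Qed.

Lemma linf_dist_le x y r : (forall k, Cmod (Cminus (x k) (y k)) <= r) ->
  exists d, linf_dist x y = Finite d /\ 0 <= d <= r.
Proof.
  intros H.
  assert (Hup : Rbar_le (linf_dist x y) (Finite r)).
  { apply Rbar_not_lt_le. intros Hlt. apply Sup_seq_minor_lt in Hlt as [k Hk].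
    specialize (H k). simpl in Hk. lra. }
  generalize (linf_dist_ge_coord x y 0) (Cmod_ge_0 (Cminus (x 0%nat) (y 0%nat))).
  destruct (linf_dist x y) as [d| |]; simpl in *; try tauto.
  intros Hlo Hpos. exists d. split; [reflexivity | lra].
Qed.

Definition uniformly_bounded (K : seqC -> Prop) (M : R) : Prop :=
  forall x, K x -> forall k, Cmod (x k) <= M.

Lemma hausdorff_comm A B : hausdorff A B = hausdorff B A.
Proof. apply Rmax_comm. Qed.

Section HausdorffBounds.

Variables (A B : seqC -> Prop) (MA MB : R).
Hypotheses (A_bnd : uniformly_bounded A MA)
  (B_ne : exists b, B b) (B_bnd : uniformly_bounded B MB).

Lemma dist_to_set_spec x : (forall k, Cmod (x k) <= MA) ->
  exists d, dist_to_set x B = Finite d /\ d <= MA + MB /\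
    forall r, d < r -> exists b, B b /\ forall k, Cmod (Cminus (x k) (b k)) < r.
Proof.
  intros Hx. destruct B_ne as [b0 Bb0].
  assert (Hdist : forall b, B b ->
            exists r, linf_dist x b = Finite r /\ 0 <= r <= MA + MB).
  { intros b Bb. apply linf_dist_le. intros k.
    generalize (Cmod_Cminus_le (x k) (b k)) (Hx k) (B_bnd b Bb k). lra. }
  unfold dist_to_set.
  set (E := fun r => exists b, B b /\ linf_dist x b = Finite r).
  destruct (Glb_Rbar_correct E) as [Hlb Hglb].
  assert (Hge0 : Rbar_le (Finite 0) (Glb_Rbar E)).
  { apply Hglb. intros r [b [Bb Hr]]. destruct (Hdist b Bb) as [r' [Hr' Hrange]].
    rewrite Hr in Hr'. injection Hr' as ->. simpl. lra. }
  destruct (Hdist b0 Bb0) as [r0 [Hr0 Hr0M]].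
  assert (Hle : Rbar_le (Glb_Rbar E) (Finite r0)) by (apply Hlb; exists b0; auto).
  destruct (Glb_Rbar E) as [d| |]; simpl in Hge0, Hle; try tauto.
  exists d. split; [reflexivity | split; [lra |]].
  intros r Hr. apply NNPP. intros Hno.
  assert (Hlb' : is_lb_Rbar E (Finite r)).
  { intros r' [b [Bb Hr']]. simpl. apply Rnot_lt_le. intros Hlt. apply Hno.
    exists b. split; [exact Bb |]. intros k.
    generalize (linf_dist_Finite_coord x b k r' Hr'). lra. }
  specialize (Hglb _ Hlb'). simpl in Hglb. lra.
Qed.

(* [real] sends an infinite excess to 0, hence the bound on A. *)
Lemma dist_to_set_le_hausdorff x : A x ->
  exists d, dist_to_set x B = Finite d /\ d <= hausdorff A B /\
    forall r, d < r -> exists b, B b /\ forall k, Cmod (Cminus (x k) (b k)) < r.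
Proof.
  intros Ax. destruct (dist_to_set_spec x (A_bnd x Ax)) as [d [Hd [_ Happrox]]].
  exists d. split; [exact Hd | split; [| exact Happrox]].
  unfold hausdorff, excess.
  set (E := fun r => exists a, A a /\ dist_to_set a B = Finite r).
  destruct (Lub_Rbar_correct E) as [Hub Hlub].
  assert (Hup : Rbar_le (Lub_Rbar E) (Finite (MA + MB))).
  { apply Hlub. intros r [a [Aa Hr]].
    destruct (dist_to_set_spec a (A_bnd a Aa)) as [d' [Hd' [HdM _]]].
    rewrite Hr in Hd'. injection Hd' as ->. exact HdM. }
  assert (Hlo : Rbar_le (Finite d) (Lub_Rbar E)) by (apply Hub; exists x; auto).
  destruct (Lub_Rbar E) as [e| |]; simpl in Hup, Hlo; try tauto.
  apply Rle_trans with e; [exact Hlo | apply Rmax_l].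
Qed.

Lemma hausdorff_lt_coord_close x eps : A x -> hausdorff A B < eps ->
  exists b, B b /\ forall k, Cmod (Cminus (x k) (b k)) < eps.
Proof.
  intros Ax Hh. destruct (dist_to_set_le_hausdorff x Ax) as [d [_ [Hdh Happrox]]].
  apply Happrox. lra.
Qed.

Lemma hausdorff_ge_coord_far x c : A x ->
  (forall b, B b -> exists k, c <= Cmod (Cminus (x k) (b k))) -> c <= hausdorff A B.
Proof.
  intros Ax Hfar. destruct (dist_to_set_le_hausdorff x Ax) as [d [_ [Hdh Happrox]]].
  apply Rnot_lt_le. intros Hlt.
  destruct (Happrox c ltac:(lra)) as [b [Bb Hb]].
  destruct (Hfar b Bb) as [k Hk]. specialize (Hb k). lra.
Qed.

End HausdorffBounds.

Lemma list_uniformly_bounded (l : list seqC) :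
  (forall c, In c l -> bounded_seq c) ->
  exists M, forall c, In c l -> forall k, Cmod (c k) <= M.
Proof.
  induction l as [|c l IH]; intros Hb.
  - exists 0. intros c [].
  - destruct IH as [M HM]; [intros c' Hin; apply Hb; now right |].
    destruct (Hb c (or_introl eq_refl)) as [Mc HMc].
    exists (Rmax Mc M). intros c' [<-|Hin] k.
    + apply Rle_trans with (2 := Rmax_l Mc M), HMc.
    + apply Rle_trans with (2 := Rmax_r Mc M), HM, Hin.
Qed.

(* Cover K by the open unit balls centred at its points. *)
Lemma compact_uniformly_bounded K : nonempty_compact K ->
  exists M, uniformly_bounded K M.
Proof.
  intros [_ [Hb Hc]].
  set (U := fun (c : {x | K x}) (y : seqC) =>
              exists r, r < 1 /\ forall k, Cmod (Cminus (proj1_sig c k) (y k)) <= r).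
  destruct (Hc _ U) as [l Hl].
  - intros c y [r [Hr Hcy]]. exists ((1 - r) / 2). split; [lra |].
    intros z Hz. exists (r + (1 - r) / 2). split; [lra |]. intros k.
    generalize (Cmod_Cminus_triangle (proj1_sig c k) (y k) (z k))
      (linf_dist_lt_coord y z k _ Hz) (Hcy k). lra.
  - intros x Kx. exists (exist _ x Kx). exists 0. split; [lra |]. intros k.
    simpl. replace (Cminus (x k) (x k)) with (RtoC 0) by (unfold Cminus; ring).
    rewrite Cmod_0. lra.
  - destruct (list_uniformly_bounded (map (@proj1_sig _ _) l)) as [M HM].
    { intros c Hin. apply in_map_iff in Hin as [[c' Kc'] [<- _]]. exact (Hb c' Kc'). }
    exists (M + 1). intros x Kx k.
    destruct (Hl x Kx) as [c [Hin [r [Hr Hcx]]]].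
    generalize (Cmod_le_Cmod_Cminus (proj1_sig c k) (x k)) (Hcx k)
      (HM _ (in_map _ _ _ Hin) k). lra.
Qed.

Lemma le_of_le_add_pow s c K v : 0 <= s < 1 ->
  (forall n, v <= c + s ^ n * K) -> v <= c.
Proof.
  intros Hs H.
  assert (Hgeom : is_lim_seq (fun n => c + s ^ n * K) (c + 0 * K)).
  { apply (is_lim_seq_plus' _ _ c (0 * K)); [apply is_lim_seq_const |].
    apply is_lim_seq_mult'; [| apply is_lim_seq_const].
    apply is_lim_seq_geom. rewrite Rabs_pos_eq; lra. }
  generalize (is_lim_seq_le _ _ v _ H (is_lim_seq_const v) Hgeom). simpl. lra.
Qed.

(* Each backward step shrinks phi - c by a factor at most s, so n steps bound
   it by s^n (M - c). *)
Lemma invariant_contraction_bound {T : Type} (P : T -> Prop) (phi : T -> R) s c M :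
  0 <= s < 1 -> (forall x, P x -> phi x <= M) ->
  (forall x, P x -> exists y l, P y /\ 0 <= l <= s /\ phi x - c <= l * (phi y - c)) ->
  forall x, P x -> phi x <= c.
Proof.
  intros Hs HM Hstep.
  assert (Hn : forall n x, P x -> phi x - c <= s ^ n * Rmax 0 (M - c)).
  { induction n as [|n IH]; intros x Px.
    - simpl. generalize (HM x Px) (Rmax_r 0 (M - c)). lra.
    - destruct (Hstep x Px) as [y [l [Py [Hl Hxy]]]].
      specialize (IH y Py).
      assert (0 <= s ^ n * Rmax 0 (M - c))
        by (apply Rmult_le_pos; [apply pow_le; lra | apply Rmax_l]).
      simpl. nra. }
  intros x Px. apply (le_of_le_add_pow s c (Rmax 0 (M - c))); [exact Hs |].
  intros n. specialize (Hn n x Px). lra.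
Qed.

Definition theta (k : nat) : R := PI / (2 * INR (S k)).

Lemma INR_mul_theta k : INR (S k) * theta k = PI / 2.
Proof. unfold theta. field. generalize (pos_INR k). rewrite S_INR. lra. Qed.

Lemma theta_bounds k : 0 < theta k <= PI / 2.
Proof.
  generalize (INR_mul_theta k) PI_RGT_0 (pos_INR k). rewrite S_INR. intros H Hpi Hk.
  split; nra.
Qed.

Lemma Re_f_map t y k : Re (f_map t y k) = t / 4 * Re (y k) + (1 - t / 4).
Proof. unfold f_map. destruct (y k). simpl. ring. Qed.

Lemma Im_f_map t y k : Im (f_map t y k) = t / 4 * Im (y k).
Proof. unfold f_map. destruct (y k). simpl. ring. Qed.

Lemma Im_g_map t y k :
  Im (g_map t y k) = t * (Re (y k) * sin (theta k) + Im (y k) * cos (theta k)).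
Proof. unfold g_map, cis. fold (theta k). destruct (y k). simpl. ring. Qed.

Lemma Cmod_f_map_le t y k : 0 <= t <= 4 ->
  Cmod (f_map t y k) <= t / 4 * Cmod (y k) + (1 - t / 4).
Proof.
  intros Ht. unfold f_map. eapply Rle_trans; [apply Cmod_triangle |].
  rewrite Cmod_mult, !Cmod_R, !Rabs_pos_eq by lra. lra.
Qed.

Lemma Cmod_g_map t y k : 0 <= t -> Cmod (g_map t y k) = t * Cmod (y k).
Proof.
  intros Ht. unfold g_map. rewrite !Cmod_mult, Cmod_cis, Cmod_R, Rabs_pos_eq by lra.
  ring.
Qed.

Lemma g_map_iter_coord t m w k :
  Nat.iter m (g_map t) w k =
  Cmult (RtoC (t ^ m)) (Cmult (cis (INR m * theta k)) (w k)).
Proof.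
  induction m as [|m IH].
  - unfold cis. simpl. rewrite Rmult_0_l, cos_0, sin_0.
    destruct (w k). unfold Cmult, RtoC. simpl. f_equal; ring.
  - rewrite Nat.iter_succ. unfold g_map at 1. fold (theta k).
    rewrite IH, S_INR, Rmult_plus_distr_r, Rmult_1_l, <- cis_add.
    change (t ^ S m) with (t * t ^ m). rewrite RtoC_mult. ring.
Qed.

Lemma Im_g_map_iter_quarter_turn t w k :
  Im (Nat.iter (S k) (g_map t) w k) = t ^ S k * Re (w k).
Proof.
  rewrite g_map_iter_coord, INR_mul_theta. unfold cis. rewrite cos_PI2, sin_PI2.
  destruct (w k). simpl. ring.
Qed.

Section Attractor.

Variables (t : R) (A : seqC -> Prop).
Hypotheses (t_range : 0 <= t < 1) (A_attr : is_attractor t A).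

Lemma attractor_nonempty : exists x, A x.
Proof. apply A_attr. Qed.

Lemma attractor_f_closed y : A y -> A (f_map t y).
Proof. intros Ay. apply (proj2 A_attr). left. eauto. Qed.

Lemma attractor_g_iter_closed m y : A y -> A (Nat.iter m (g_map t) y).
Proof.
  intros Ay. induction m as [|m IH]; [exact Ay |].
  apply (proj2 A_attr). right. eauto.
Qed.

Lemma attractor_preimage x : A x ->
  exists y, A y /\ (x = f_map t y \/ x = g_map t y).
Proof.
  intros Ax. destruct (proj1 (proj2 A_attr x) Ax) as [[y [Ay ->]]|[y [Ay ->]]]; eauto.
Qed.

Lemma attractor_bounded : uniformly_bounded A 1.
Proof.
  destruct (compact_uniformly_bounded A (proj1 A_attr)) as [M HM].
  intros x Ax k.
  apply (invariant_contraction_bound A (fun x => Cmod (x k)) t 1 M t_range);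
    [intros z Az; apply HM, Az | | exact Ax].
  intros z Az. destruct (attractor_preimage z Az) as [y [Ay [->| ->]]].
  - exists y, (t / 4). split; [exact Ay | split; [lra | cbv beta]].
    generalize (Cmod_f_map_le t y k ltac:(lra)). lra.
  - exists y, t. split; [exact Ay | split; [lra | cbv beta]].
    rewrite Cmod_g_map by lra. lra.
Qed.

Lemma attractor_Im_bound k x : A x -> Rabs (Im (x k)) <= sin (theta k) / (1 - t).
Proof.
  set (c := sin (theta k) / (1 - t)).
  assert (Hsin : 0 <= sin (theta k) <= 1).
  { split; [| apply SIN_bound]. generalize (theta_bounds k). intros.
    apply sin_ge_0; lra. }
  assert (Hc : c * (1 - t) = sin (theta k)) by (unfold c; field; lra).
  assert (Hc0 : 0 <= c) by (unfold c; apply Rdiv_le_0_compat; lra).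
  apply (invariant_contraction_bound A (fun x => Rabs (Im (x k))) t c 1 t_range).
  { intros z Az. apply Rle_trans with (2 := attractor_bounded z Az k), Rabs_Im_le_Cmod. }
  intros z Az. destruct (attractor_preimage z Az) as [y [Ay [->| ->]]].
  - exists y, (t / 4). split; [exact Ay | split; [lra | cbv beta]].
    rewrite Im_f_map, Rabs_mult, (Rabs_pos_eq (t / 4)) by lra. nra.
  - exists y, t. split; [exact Ay | split; [lra | cbv beta]].
    rewrite Im_g_map, Rabs_mult, (Rabs_pos_eq t) by lra.
    assert (Hre : Rabs (Re (y k)) <= 1)
      by (apply Rle_trans with (2 := attractor_bounded y Ay k), re_le_Cmod).
    assert (Hcos : Rabs (cos (theta k)) <= 1) by (apply Rabs_le, COS_bound).
    assert (Hsum : Rabs (Re (y k) * sin (theta k) + Im (y k) * cos (theta k))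
                   <= sin (theta k) + Rabs (Im (y k))).
    { eapply Rle_trans; [apply Rabs_triang |].
      rewrite !Rabs_mult, (Rabs_pos_eq (sin _)) by lra.
      generalize (Rabs_pos (Re (y k))) (Rabs_pos (Im (y k))) (Rabs_pos (cos (theta k))). nra. }
    nra.
Qed.

(* f_t pushes the real part towards 1; k+1 applications of g_t then turn it
   into imaginary part. *)
Lemma attractor_Im_large k : exists y, A y /\ 7 / 8 * t ^ S k <= Im (y k).
Proof.
  destruct attractor_nonempty as [a Aa].
  set (w := f_map t (f_map t a)).
  assert (Hw : 7 / 8 <= Re (w k)).
  { assert (Hre : -1 <= Re (a k)).
    { generalize (re_le_Cmod (a k)) (attractor_bounded a Aa k) (Rabs_maj2 (Re (a k))).
      lra. }
    unfold w. rewrite !Re_f_map. nra. }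
  exists (Nat.iter (S k) (g_map t) w). split.
  - apply attractor_g_iter_closed, attractor_f_closed, attractor_f_closed, Aa.
  - rewrite Im_g_map_iter_quarter_turn.
    assert (0 <= t ^ S k) by (apply pow_le; lra). nra.
Qed.

End Attractor.

Lemma pow_ge_1_sub_mul t m : 0 <= t -> 1 - INR m * (1 - t) <= t ^ m.
Proof.
  intros Ht. induction m as [|m IH]; [rewrite INR_0, pow_O; lra |].
  rewrite S_INR. simpl. generalize (pos_INR m). intros Hm.
  assert (0 <= t * (t ^ m - (1 - INR m * (1 - t)))) by (apply Rmult_le_pos; lra).
  assert (0 <= INR m * ((1 - t) * (1 - t)))
    by (apply Rmult_le_pos; [exact Hm | apply Rle_0_sqr]).
  nra.
Qed.

Lemma sin_theta_small s : s < 1 -> exists k, sin (theta k) / (1 - s) <= 1 / 8.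
Proof.
  intros Hs. destruct (INR_unbounded (16 / (1 - s))) as [k Hk]. exists k.
  assert (H16 : 16 < (1 - s) * INR (S k)).
  { rewrite S_INR. assert (16 / (1 - s) * (1 - s) = 16) by (field; lra). nra. }
  generalize (INR_mul_theta k) (theta_bounds k) (sin_lt_x (theta k) (proj1 (theta_bounds k)))
    PI_4. intros Htheta Hbounds Hsin HPI.
  apply Rmult_le_reg_r with (1 - s); [lra |].
  unfold Rdiv. rewrite Rmult_assoc, Rinv_l by lra. nra.
Qed.

Section AttractorFamily.

Variable A : R -> seqC -> Prop.
Hypothesis A_attr : forall t, 0 <= t < 1 -> is_attractor t (A t).

(* The threshold t0 = 1 - 1/(7(k+1)) makes t^(k+1) >= 6/7 by Bernoulli. *)
Lemma attractors_separate s : 0 <= s < 1 ->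
  exists k t0, 0 <= t0 < 1 /\ (forall x, A s x -> Rabs (Im (x k)) <= 1 / 8) /\
    forall t, t0 <= t < 1 -> exists y, A t y /\ 3 / 4 <= Im (y k).
Proof.
  intros Hs. destruct (sin_theta_small s (proj2 Hs)) as [k Hk].
  assert (Hk1 : 1 <= INR (S k)) by (rewrite S_INR; generalize (pos_INR k); lra).
  assert (Hgap : 0 < 1 / (7 * INR (S k)) <= 1 / 7).
  { split; [apply Rdiv_lt_0_compat; lra |].
    apply Rmult_le_reg_r with (7 * INR (S k)); [lra |].
    unfold Rdiv. rewrite Rmult_assoc, Rinv_l by lra. nra. }
  exists k, (1 - 1 / (7 * INR (S k))). split; [lra | split].
  - intros x Ax. apply Rle_trans with (2 := Hk).
    exact (attractor_Im_bound s (A s) Hs (A_attr s Hs) k x Ax).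
  - intros t Ht. assert (Ht' : 0 <= t < 1) by lra.
    destruct (attractor_Im_large t (A t) Ht' (A_attr t Ht') k) as [y [Ay Hy]].
    exists y. split; [exact Ay |].
    assert (Hpow : 6 / 7 <= t ^ S k).
    { apply Rle_trans with (2 := pow_ge_1_sub_mul t (S k) (proj1 Ht')).
      assert (INR (S k) * (1 - t) <= 1 / 7).
      { apply Rle_trans with (INR (S k) * (1 / (7 * INR (S k))));
          [apply Rmult_le_compat_l; lra | right; field; lra]. }
      lra. }
    lra.
Qed.

Lemma hausdorff_attractors_ge s : 0 <= s < 1 ->
  exists t0, t0 < 1 /\ forall t, t0 <= t < 1 -> 1 / 2 <= hausdorff (A t) (A s).
Proof.
  intros Hs. destruct (attractors_separate s Hs) as [k [t0 [Ht0 [Hsmall Hlarge]]]].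
  exists t0. split; [lra |]. intros t Ht. assert (Ht' : 0 <= t < 1) by lra.
  destruct (Hlarge t Ht) as [y [Ay Hy]].
  apply (hausdorff_ge_coord_far (A t) (A s) 1 1
    (attractor_bounded t (A t) Ht' (A_attr t Ht'))
    (attractor_nonempty s (A s) (A_attr s Hs)) (attractor_bounded s (A s) Hs (A_attr s Hs))
    y (1 / 2) Ay).
  intros b Ab. exists k.
  generalize (Im_sub_le_Cmod (y k) (b k)) (Hsmall b Ab) (Rle_abs (Im (b k))). lra.
Qed.

(* A limit B would be 1/8-close both to A_(t_N) and to A_(t_n) for every large n,
   but these are 1/2 apart in a suitable coordinate. *)
Lemma no_hausdorff_limit tn : (forall n, 0 <= tn n < 1) -> is_lim_seq tn 1 ->
  ~ (exists B, nonempty_compact B /\ is_lim_seq (fun n => hausdorff (A (tn n)) B) 0).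
Proof.
  intros Htn Hlim [B [HB Hh]].
  destruct (compact_uniformly_bounded B HB) as [MB HMB].
  apply is_lim_seq_spec in Hh. destruct (Hh (mkposreal (1 / 8) ltac:(lra))) as [N HN].
  simpl in HN.
  destruct (attractors_separate (tn N) (Htn N)) as [k [t0 [Ht0 [Hsmall Hlarge]]]].
  apply is_lim_seq_spec in Hlim.
  destruct (Hlim (mkposreal (1 - t0) ltac:(lra))) as [N' HN']. simpl in HN'.
  set (n := max N N').
  assert (Htn_n : t0 <= tn n < 1).
  { specialize (HN' n (Nat.le_max_r N N')). generalize (Rabs_maj2 (tn n - 1)) (Htn n). lra. }
  destruct (Hlarge (tn n) Htn_n) as [y [Ay Hy]].
  assert (Hclose : forall m, (N <= m)%nat -> hausdorff (A (tn m)) B < 1 / 8).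
  { intros m Hm. specialize (HN m Hm). rewrite Rminus_0_r in HN.
    generalize (Rle_abs (hausdorff (A (tn m)) B)). lra. }
  destruct (hausdorff_lt_coord_close (A (tn n)) B 1 MB
    (attractor_bounded _ _ (Htn n) (A_attr _ (Htn n))) (proj1 HB) HMB y (1 / 8) Ay
    (Hclose n (Nat.le_max_l N N'))) as [b [Bb Hyb]].
  assert (Hclose_N : hausdorff B (A (tn N)) < 1 / 8)
    by (rewrite hausdorff_comm; apply Hclose, Nat.le_refl).
  destruct (hausdorff_lt_coord_close B (A (tn N)) MB 1 HMB
    (attractor_nonempty _ _ (A_attr _ (Htn N)))
    (attractor_bounded _ _ (Htn N) (A_attr _ (Htn N))) b (1 / 8) Bb Hclose_N)
    as [a [Aa Hba]].
  generalize (Im_sub_le_Cmod (y k) (b k)) (Im_sub_le_Cmod (b k) (a k))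
    (Hyb k) (Hba k) (Hsmall a Aa) (Rle_abs (Im (a k))).
  lra.
Qed.

End AttractorFamily.

Theorem mainTheorem14 :
  forall A : R -> seqC -> Prop,
    (forall t, 0 <= t < 1 -> is_attractor t (A t)) ->
    (forall tn : nat -> R,
        (forall n, 0 <= tn n < 1) -> is_lim_seq tn 1 ->
        ~ (exists B, nonempty_compact B /\
                     is_lim_seq (fun n => hausdorff (A (tn n)) B) 0))
    /\ (~ exists Ab, upper_transition_attractor A Ab)
    /\ (forall s, 1/2 <= s < 1 ->
          exists t0, t0 < 1 /\
            forall t, t0 <= t < 1 -> hausdorff (A t) (A s) >= 1/2).
Proof.
  intros A HA. split; [| split].
  - exact (no_hausdorff_limit A HA).
  - intros [Ab [HAb [tn [Htn [_ [Hlim Hh]]]]]].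
    exact (no_hausdorff_limit A HA tn Htn Hlim (ex_intro _ Ab (conj HAb Hh))).
  - intros s Hs. destruct (hausdorff_attractors_ge A HA s ltac:(lra)) as [t0 [Ht0 Hfar]].
    exists t0. split; [exact Ht0 |]. intros t Ht. apply Rle_ge, Hfar, Ht.
Qed.
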